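(* Let $\bm{\sigma}=[\mathcal{T}_0,\dots,\mathcal{T}_N]$ be a finite trajectory, $\varphi_1,\varphi_2$ MTL formulas, and suppose binary variables $\xi^b_{\varphi_i,j}\in\{0,1\}$ satisfy $\xi^b_{\varphi_i,j}=1\Leftrightarrow\bm{\sigma}\models_j\varphi_i$ for $i=1,2$ and all relevant $j$. Let $k$ be a time index and $t_1\le t_2$ nonnegative integers with $k+t_2\le N$, and let $\tau=t_2-t_1+1$. Then $\bm{\sigma}\models_k \varphi_1\,\mathcal{U}_{[\![t_1,t_2]\!]}\,\varphi_2$ if and only if the following $\tau$ linear inequalities hold: $$\sum_{j=k+t_1}^{k+t_2}\xi^b_{\varphi_2,j}\ge1,$$ $$\xi^b_{\varphi_2,t}\le\sum_{j=k+t_1}^{t-1}\left(\frac{\xi^b_{\varphi_1,j}}{t-t_1-k}+\xi^b_{\varphi_2,j}\right)\quad\text{for all integers } t \text{ with } k+t_1<t\le k+t_2.$$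
   Context: MTL semantics on a finite trajectory $\bm{\sigma}=[\mathcal{T}_0,\dots,\mathcal{T}_N]$, $\mathcal{T}_k\subseteq\mathcal{P}$. The (nonstandard) until operator is defined by: $\bm{\sigma}\models_k\varphi_1\,\mathcal{U}_{[\![t_1,t_2]\!]}\,\varphi_2$ iff there exists an integer $t\in[k+t_1,k+t_2]$ with $\bm{\sigma}\models_t\varphi_2$ and $\bm{\sigma}\models_{t'}\varphi_1$ for all integers $t'$ with $k+t_1\le t'<t$. Here $[\![a,b]\!]$ denotes the integers in $[a,b]$. *)

From mathcomp Require Import all_boot all_order all_algebra.
Set Implicit Arguments. Unset Strict Implicit. Unset Printing Implicit Defensive.

Inductive mtl (P : Type) : Type :=
  | MTrue
  | MAtom of P
  | MNot of mtl P
  | MAnd of mtl P & mtl P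
  | MUntil of nat & nat & mtl P & mtl P.   (* MUntil t1 t2 f g = f U_[[t1,t2]] g *)

(* A finite trajectory [T_0; ...; T_N] : each T_k is a subset of P, given by
   its membership predicate. Atoms are false outside the trajectory. *)
Definition trajectory (P : Type) := seq (P -> bool).

(* sat sigma k f  <->  sigma |=_k f  (with the paper's nonstandard until). *)
Fixpoint sat (P : Type) (sigma : trajectory P) (k : nat) (f : mtl P) : Prop :=
  match f with
  | MTrue => True
  | MAtom p => nth (fun _ => false) sigma k p
  | MNot g => ~ sat sigma k g
  | MAnd g h => sat sigma k g /\ sat sigma k h
  | MUntil t1 t2 g h =>
      exists t : nat, [/\ k + t1 <= t, t <= k + t2, sat sigma t h &
        forall t' : nat, k + t1 <= t' -> t' < t -> sat sigma t' g]
  end.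

(* Only the first time t at which phi2 holds in the window matters.  If phi1
   holds on [k + t1, s) and phi2 at s, the t-th inequality holds for t <= s
   because its phi1-terms average to 1, and for t > s because its sum contains
   xi2 s = 1.  Conversely, at the least m with xi2 m = 1 all earlier xi2-terms
   vanish, so the m-th inequality says that the bits xi1 on [k + t1, m) have
   average at least 1, which forces all of them to be 1. *)
From mathcomp Require Import all_boot all_order all_algebra.
From mathcomp Require Import zify.
Set Implicit Arguments. Unset Strict Implicit. Unset Printing Implicit Defensive.
Import Order.TTheory GRing.Theory Num.Theory.
Local Open Scope ring_scope.

Lemma ler_term_sum (R : numDomainType) (I : eqType) (r : seq I) (F : I -> R) j :
  uniq r -> j \in r -> (forall i, i \in r -> 0 <= F i) ->
  F j <= \sum_(i <- r) F i.
Proof.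
move=> r_uniq jr F_ge0; rewrite (bigD1_seq j) //= lerDl.
by rewrite big_seq_cond sumr_ge0 // => i /andP[/F_ge0].
Qed.

Lemma sumr_gt0_exists (R : realDomainType) (I : eqType) (r : seq I) (F : I -> R) :
  0 < \sum_(i <- r) F i -> exists2 i, i \in r & 0 < F i.
Proof.
move=> sum_gt0; apply/hasP; apply: contraTT sum_gt0 => /hasPn F_le0.
by rewrite -leNgt big_seq sumr_le0 // => i /F_le0; rewrite -leNgt.
Qed.

Lemma sumr_ge_size_eq1 (R : numDomainType) (I : eqType) (r : seq I) (F : I -> R) :
  (forall i, i \in r -> F i <= 1) -> (size r)%:R <= \sum_(i <- r) F i ->
  forall i, i \in r -> F i = 1.
Proof.
move=> F_le1 size_le i ir.
have F_ge0 j : j \in r -> 0 <= 1 - F j by move/F_le1; rewrite subr_ge0.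
have : \sum_(j <- r | j \in r) (1 - F j) == 0.
  rewrite -sum1_size natr_sum mulr1n -subr_le0 -sumrB in size_le.
  by rewrite -big_seq eq_le size_le big_seq sumr_ge0.
by rewrite psumr_eq0 // => /allP/(_ i ir); rewrite ir subr_eq0 => /eqP.
Qed.

Lemma sumr_nat_inv_const (R : numFieldType) (a c : nat) :
  (a < c)%N -> \sum_(a <= j < c) ((c - a)%:R : R)^-1 = 1.
Proof.
by move=> lt_ac; rewrite sumr_const_nat -[LHS]mulr_natr mulVf // pnatr_eq0 -lt0n subn_gt0.
Qed.

Lemma bit_bounds (R : numDomainType) (x : R) : x = 0 \/ x = 1 -> 0 <= x <= 1.
Proof. by case=> ->; rewrite ?lexx ler01. Qed.

Definition indicator_until (R : nzSemiRingType) (x1 x2 : nat -> R) (a b : nat) :=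
  exists t, [/\ (a <= t)%N, (t <= b)%N, x2 t = 1 &
    forall t', (a <= t')%N -> (t' < t)%N -> x1 t' = 1].

Section IndicatorUntil.
Variables (R : realFieldType) (x1 x2 : nat -> R) (a b : nat).
Hypothesis x_bit : forall j, (a <= j <= b)%N ->
  (x1 j = 0 \/ x1 j = 1) /\ (x2 j = 0 \/ x2 j = 1).

Let x1_bounds j : (a <= j <= b)%N -> 0 <= x1 j <= 1.
Proof. by case/x_bit => /bit_bounds. Qed.

Let x2_bounds j : (a <= j <= b)%N -> 0 <= x2 j <= 1.
Proof. by case/x_bit => _ /bit_bounds. Qed.

Lemma until_ineqs_of_indicator_until :
  indicator_until x1 x2 a b ->
  1 <= \sum_(a <= j < b.+1) x2 j /\
  forall t, (a < t <= b)%N -> x2 t <= \sum_(a <= j < t) (x1 j / (t - a)%:R + x2 j).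
Proof.
case=> s [le_as le_sb x2s x1_before].
split.
  rewrite -x2s ler_term_sum ?iota_uniq ?mem_index_iota ?le_as // => j.
  by rewrite mem_index_iota => /x2_bounds/andP[].
move=> t /andP[lt_at le_tb].
have /andP[_ x2t_le1] := @x2_bounds t ltac:(lia).
apply: le_trans x2t_le1 _.
have [le_ts | lt_st] := leqP t s.
  rewrite -[leLHS](sumr_nat_inv_const R lt_at).
  apply: ler_sum_nat => j /andP[le_aj lt_jt].
  have /andP[x2j_ge0 _] := @x2_bounds j ltac:(lia).
  by rewrite x1_before ?mul1r ?lerDl //; lia.
rewrite -[leLHS]x2s; apply: le_trans (ler_term_sum (j := s) _ _ _).
- have /andP[x1s_ge0 _] := @x1_bounds s ltac:(lia).
  by rewrite lerDr divr_ge0.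
- exact: iota_uniq.
- by rewrite mem_index_iota le_as.
move=> j; rewrite mem_index_iota => /andP[le_aj lt_jt].
have /andP[x1j_ge0 _] := @x1_bounds j ltac:(lia).
have /andP[x2j_ge0 _] := @x2_bounds j ltac:(lia).
by rewrite addr_ge0 // divr_ge0.
Qed.

Lemma indicator_until_of_until_ineqs :
  1 <= \sum_(a <= j < b.+1) x2 j ->
  (forall t, (a < t <= b)%N -> x2 t <= \sum_(a <= j < t) (x1 j / (t - a)%:R + x2 j)) ->
  indicator_until x1 x2 a b.
Proof.
move=> sum_ge1 ineqs.
have some_one : exists j, (a <= j <= b)%N && (x2 j == 1).
  have [j] := sumr_gt0_exists (lt_le_trans ltr01 sum_ge1).
  rewrite mem_index_iota => j_in x2j_gt0; exists j; rewrite j_in /=.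
  by case: (x_bit j_in) x2j_gt0 => _ [-> | ->]; rewrite ?ltxx.
case: (ex_minnP some_one) => m /andP[/andP[le_am le_mb] /eqP x2m] m_min.
have x2_before j : (a <= j < m)%N -> x2 j = 0.
  move=> /andP[le_aj lt_jm]; have j_in : (a <= j <= b)%N by lia.
  case: (x_bit j_in) => _ [] // x2j.
  by have := m_min j; rewrite j_in x2j eqxx => /(_ isT); lia.
exists m; split=> // t le_at lt_tm.
have lt_am : (a < m)%N by lia.
have := ineqs m ltac:(lia); rewrite x2m.
under eq_big_nat => i /x2_before -> do rewrite addr0.
rewrite -mulr_suml ler_pdivlMr ?mul1r ?ltr0n ?subn_gt0 // => size_le.
apply: (sumr_ge_size_eq1 (r := index_iota a m)).
- by move=> i; rewrite mem_index_iota => /andP[? ?]; case/andP: (@x1_bounds i ltac:(lia)).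
- by rewrite size_iota.
- by rewrite mem_index_iota le_at.
Qed.

End IndicatorUntil.

Lemma sat_until_indicator (R : nzSemiRingType) (P : Type) (sigma : trajectory P)
    (phi1 phi2 : mtl P) (x1 x2 : nat -> R) (k t1 t2 : nat) :
  (forall j, (k + t1 <= j <= k + t2)%N ->
     (x1 j = 1 <-> sat sigma j phi1) /\ (x2 j = 1 <-> sat sigma j phi2)) ->
  sat sigma k (MUntil t1 t2 phi1 phi2) <-> indicator_until x1 x2 (k + t1) (k + t2).
Proof.
move=> x_sat; split=> -[t [le_at le_tb until_at until_before]].
all: have t_in : (k + t1 <= t <= k + t2)%N by rewrite le_at.
all: exists t; split=> // [|t' le_at' lt_t't]; first exact/(x_sat t t_in).2.
all: have t'_in : (k + t1 <= t' <= k + t2)%N by lia.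
all: exact/(x_sat t' t'_in).1/until_before.
Qed.

Theorem proposition4 (R : realFieldType) (P : Type) (sigma : trajectory P)
  (phi1 phi2 : mtl P) (xi1 xi2 : nat -> R) (k t1 t2 : nat) :
  (t1 <= t2)%N ->
  (k + t2 < size sigma)%N ->   (* k + t2 <= N where sigma = [T_0; ...; T_N] *)
  (forall j : nat, (k + t1 <= j <= k + t2)%N ->
     (xi1 j = 0 \/ xi1 j = 1) /\ (xi2 j = 0 \/ xi2 j = 1)) ->
  (forall j : nat, (k + t1 <= j <= k + t2)%N ->
     (xi1 j = 1 <-> sat sigma j phi1) /\ (xi2 j = 1 <-> sat sigma j phi2)) ->
  (sat sigma k (MUntil t1 t2 phi1 phi2) <->
   (1 <= \sum_(k + t1 <= j < (k + t2).+1) xi2 j /\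
    forall t : nat, (k + t1 < t <= k + t2)%N ->
      xi2 t <= \sum_(k + t1 <= j < t) (xi1 j / (t - t1 - k)%:R + xi2 j))).
Proof.
move=> _ _ xi_bit xi_sat.
have sub_window t : (t - t1 - k = t - (k + t1))%N by rewrite -subnDA addnC.
rewrite (sat_until_indicator xi_sat).
split=> [/(until_ineqs_of_indicator_until xi_bit) [-> ineqs] | [sum_ge1 ineqs]].
  by split=> // t /ineqs; rewrite sub_window.
by apply: (indicator_until_of_until_ineqs xi_bit sum_ge1) => t /ineqs; rewrite sub_window.
Qed.
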